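(* Let $k\ge 1$ and let $P_{4k}$ be the path with vertices labeled $1,2,\dots,4k$ consecutively along the path. For $v\in\{1,\dots,4k\}$, $$TDV(v)=\begin{cases}0 & \text{if } v\equiv 0,1 \pmod 4,\\ 1 & \text{if } v\equiv 2,3 \pmod 4.\end{cases}$$
   Context: A set $D \subseteq V(G)$ is a total dominating set of a graph $G$ if every vertex of $G$ has a neighbor in $D$. $\gamma_t(G)$ is the minimum cardinality of a total dominating set; a minimum one is a $\gamma_t(G)$-set. $TDV(v)$ is the number of $\gamma_t(P_{4k})$-sets containing $v$. *)

From mathcomp Require Import all_boot.
Set Implicit Arguments. Unset Strict Implicit. Unset Printing Implicit Defensive.

(* The path P_n on vertex type 'I_n; ordinal i stands for the vertex labeled i+1. *)
Definition path_adj (n : nat) (i j : 'I_n) : bool :=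
  (i.+1 == j :> nat) || (j.+1 == i :> nat).

Definition total_dominating (n : nat) (D : {set 'I_n}) : bool :=
  [forall v : 'I_n, [exists u in D, path_adj v u]].

Definition gamma_t_set (n : nat) (D : {set 'I_n}) : bool :=
  total_dominating D &&
  [forall E : {set 'I_n}, total_dominating E ==> (#|D| <= #|E|)].

Definition TDV (n : nat) (v : 'I_n) : nat :=
  #|[set D : {set 'I_n} | gamma_t_set D && (v \in D)]|.

From mathcomp Require Import all_boot zify.
Set Implicit Arguments. Unset Strict Implicit. Unset Printing Implicit Defensive.

(* Cut the path (vertices 0, ..., 4k-1) into the blocks {4j, ..., 4j+3}.  The
   two middle vertices of a block have all their neighbours inside the block,
   so every total dominating set meets each block in at least one vertex of
   {4j, 4j+2} and one of {4j+1, 4j+3}; hence gamma_t(P_4k) = 2k, and a minimum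
   set takes exactly one vertex from each pair.  If 4j were chosen, 4j+2 is
   not, so 4j+3 must be dominated by 4j+4, which propagates past the end of the
   path; symmetrically 4j+3 propagates down to block 0, leaving vertex 0
   undominated.  So {4j+1, 4j+2 | j < k} is the unique minimum set and TDV is
   its indicator function. *)

Definition nat_adj (v u : nat) : bool := (v.+1 == u) || (u.+1 == v).

Section NatView.
Variable n : nat.
Implicit Type E : {set 'I_n}.

Definition nat_mem E (m : nat) : bool := [exists x in E, x == m :> nat].

Lemma nat_memE E (x : 'I_n) : nat_mem E x = (x \in E).
Proof.
apply/existsP/idP => [[y /andP[yE /eqP/val_inj <-]] //|xE].
by exists x; rewrite xE eqxx.
Qed.

Lemma nat_mem_lt E m : nat_mem E m -> m < n.
Proof. by case/existsP=> y /andP[_ /eqP <-]. Qed.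

Lemma total_dominatingP E :
  reflect (forall v, v < n -> exists2 u, nat_mem E u & nat_adj v u)
          (total_dominating E).
Proof.
apply: (iffP forallP) => [dom v ltvn | dom v].
  have /existsP[u /andP[uE adj]] := dom (Ordinal ltvn).
  by exists u; rewrite ?nat_memE.
have [m /existsP[u /andP[uE /eqP um]] adj] := dom v (ltn_ord v).
by apply/existsP; exists u; rewrite uE /path_adj um.
Qed.

Lemma card_nat_mem E : #|E| = \sum_(0 <= m < n) nat_mem E m.
Proof.
rewrite big_mkord -sum1_card big_mkcond /=.
by apply: eq_bigr => x _; rewrite nat_memE; case: (x \in E).
Qed.

End NatView.

Lemma sum_nat_blocks (b k : nat) (f : nat -> nat) :
  \sum_(0 <= m < b * k) f m = \sum_(j < k) \sum_(0 <= r < b) f (b * j + r).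
Proof.
elim: k => [|k IHk]; first by rewrite muln0 big_geq ?big_ord0.
rewrite big_ord_recr /= -IHk mulnS addnC (@big_cat_nat _ _ _ (b * k)) ?leq_addr //.
congr (_ + _); rewrite -{1}[b * k]add0n big_addn addKn.
by apply: eq_bigr => r _; rewrite addnC.
Qed.

Section Blocks.
Variables (k : nat) (e : nat -> bool).
Hypothesis e_lt : forall m, e m -> m < 4 * k.
Hypothesis e_dom : forall v, v < 4 * k -> exists2 u, e u & nat_adj v u.

Lemma dom_pred_succ v : v < 4 * k -> (0 < v) && e v.-1 || e v.+1.
Proof.
move=> /e_dom[u eu /orP[] /eqP uv]; first by rewrite uv eu orbT.
by rewrite -uv eu.
Qed.

Lemma block4E j :
  \sum_(0 <= r < 4) e (4 * j + r) = e (4 * j) + e (4 * j + 1) + e (4 * j + 2) + e (4 * j + 3).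
Proof. by rewrite !big_nat_recr //= big_geq // addn0 add0n. Qed.

Lemma block_halves j : j < k ->
  0 < e (4 * j) + e (4 * j + 2) /\ 0 < e (4 * j + 1) + e (4 * j + 3).
Proof.
move=> ltjk; have := @dom_pred_succ (4 * j + 1); have := @dom_pred_succ (4 * j + 2).
have -> : (4 * j + 1).-1 = 4 * j by lia.
have -> : (4 * j + 2).-1 = 4 * j + 1 by lia.
have -> : (4 * j + 1).+1 = 4 * j + 2 by lia.
have -> : (4 * j + 2).+1 = 4 * j + 3 by lia.
move=> /(_ ltac:(lia)) + /(_ ltac:(lia)); lia.
Qed.

Lemma block_ge2 j : j < k -> 2 <= \sum_(0 <= r < 4) e (4 * j + r).
Proof. by move=> /block_halves; rewrite block4E; lia. Qed.

Hypothesis block_eq2 : forall j, j < k -> \sum_(0 <= r < 4) e (4 * j + r) = 2.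

Lemma block_halves_eq1 j : j < k ->
  e (4 * j) + e (4 * j + 2) = 1 /\ e (4 * j + 1) + e (4 * j + 3) = 1.
Proof. by move=> ltjk; have := block_eq2 ltjk; have := block_halves ltjk; rewrite block4E; lia. Qed.

(* A vertex 4j in e leaves 4j+3 to be dominated from the right. *)
Lemma block_first_shift j : e (4 * j) -> e (4 * j.+1).
Proof.
move=> ej; have ltjk : j < k by have := e_lt ej; lia.
have [+ _] := block_halves_eq1 ltjk; rewrite ej => e2.
have := @dom_pred_succ (4 * j + 3) ltac:(lia).
have -> : (4 * j + 3).-1 = 4 * j + 2 by lia.
have -> : (4 * j + 3).+1 = 4 * j.+1 by lia.
by move: e2; case: (e (4 * j + 2)); rewrite ?andbT ?andbF.
Qed.

Lemma block_first_notin j : ~~ e (4 * j).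
Proof.
apply/negP => ej; have shift d : e (4 * (j + d)).
  by elim: d => [|d IHd]; rewrite ?addn0 ?addnS ?(block_first_shift IHd).
by have /e_lt := shift k; lia.
Qed.

(* A vertex 4j+7 in e leaves 4j+4 to be dominated from the left. *)
Lemma block_last_shift j : e (4 * j.+1 + 3) -> e (4 * j + 3).
Proof.
move=> ej; have ltjk : j.+1 < k by have := e_lt ej; lia.
have [_ +] := block_halves_eq1 ltjk; rewrite ej => e1.
have := @dom_pred_succ (4 * j.+1) ltac:(lia).
have -> : (4 * j.+1).-1 = 4 * j + 3 by lia.
have -> : (4 * j.+1).+1 = 4 * j.+1 + 1 by lia.
by move: e1; case: (e (4 * j.+1 + 1)) => // _; rewrite orbF => /andP[].
Qed.

Lemma block_last_notin j : ~~ e (4 * j + 3).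
Proof.
elim: j => [|j IHj]; last by apply: contra IHj; apply: block_last_shift.
apply/negP => e3; have ltk : 0 < k by have := e_lt e3; lia.
have [_] := block_halves_eq1 ltk; have := @dom_pred_succ 0 ltac:(lia).
by rewrite e3 /= => ->.
Qed.

Lemma tight_block_memE j r : j < k -> r < 4 -> e (4 * j + r) = (r == 1) || (r == 2).
Proof.
move=> ltjk ltr4; have [] := block_halves_eq1 ltjk.
move: (block_first_notin j) (block_last_notin j) => /negbTE e0 /negbTE e3.
rewrite e0 e3 addn0 => e2 e1.
case: r ltr4 => [|[|[|[|r]]]] //= _; rewrite ?addn0 //.
- by case: (e _) e1.
- by case: (e _) e2.
Qed.

Lemma tight_memE m : e m = (m < 4 * k) && ((m %% 4 == 1) || (m %% 4 == 2)).
Proof.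
have [ltmk | lekm] := ltnP m (4 * k); last by apply/negbTE/negP => /e_lt; lia.
by rewrite {1}(divn_eq m 4) mulnC tight_block_memE ?ltn_mod //; lia.
Qed.

End Blocks.

Lemma TDV_unique_gamma_t_set n (D0 : {set 'I_n}) (v : 'I_n) :
  (forall D, gamma_t_set D = (D == D0)) -> TDV v = (v \in D0).
Proof.
move=> gammaE; rewrite /TDV.
have -> : [set D | gamma_t_set D && (v \in D)] = if v \in D0 then [set D0] else set0.
  apply/setP => D; rewrite inE gammaE.
  by case: eqP => [->|neD]; case: ifP => _; rewrite ?inE //; apply/esym/eqP.
by case: ifP; rewrite ?cards1 ?cards0.
Qed.

Section PathP4k.
Variable k : nat.

(* In the labels 1, ..., 4k of the statement: the vertices congruent to 2, 3 mod 4. *)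
Definition mid_block_set : {set 'I_(4 * k)} :=
  [set x : 'I_(4 * k) | (x %% 4 == 1) || (x %% 4 == 2)].

Lemma nat_mem_mid_block m :
  nat_mem mid_block_set m = (m < 4 * k) && ((m %% 4 == 1) || (m %% 4 == 2)).
Proof.
have [ltmk | lekm] := ltnP m (4 * k); last by apply/negbTE/negP => /nat_mem_lt; lia.
by rewrite (nat_memE _ (Ordinal ltmk)) inE.
Qed.

Lemma mid_block_total_dominating : total_dominating mid_block_set.
Proof.
apply/total_dominatingP => v ltvk.
have [lo | hi] := boolP ((v %% 4 == 0) || (v %% 4 == 1)).
- by exists v.+1; [rewrite nat_mem_mid_block; lia | rewrite /nat_adj eqxx].
- by exists v.-1; [rewrite nat_mem_mid_block | rewrite /nat_adj]; lia.
Qed.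

Lemma card_blocks (E : {set 'I_(4 * k)}) :
  #|E| = \sum_(j < k) \sum_(0 <= r < 4) nat_mem E (4 * j + r).
Proof. by rewrite card_nat_mem sum_nat_blocks. Qed.

Lemma card_mid_block_set : #|mid_block_set| = 2 * k.
Proof.
rewrite card_blocks (eq_bigr (fun=> 2)) ?sum_nat_const ?card_ord 1?mulnC // => j _.
rewrite block4E !nat_mem_mid_block ![4 * j]mulnC modnMl !modnMDl /= !andbF !andbT.
have := ltn_ord j; lia.
Qed.

Lemma total_dominating_card_leqif (E : {set 'I_(4 * k)}) : total_dominating E ->
  2 * k <= #|E| ?= iff [forall j : 'I_k, \sum_(0 <= r < 4) nat_mem E (4 * j + r) == 2].
Proof.
move=> /total_dominatingP dom; rewrite card_blocks.
have -> : 2 * k = \sum_(j < k) 2 by rewrite sum_nat_const card_ord mulnC.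
apply: leqif_sum => j _; rewrite -[eqn _ _]/(_ == 2) eq_sym; apply: leqif_eq.
exact: (block_ge2 dom (ltn_ord j)).
Qed.

Lemma gamma_t_setE (E : {set 'I_(4 * k)}) : gamma_t_set E = (E == mid_block_set).
Proof.
apply/andP/eqP => [[tdE /forallP minE] | ->]; last first.
  split; first exact: mid_block_total_dominating.
  apply/forallP => F; apply/implyP => /total_dominating_card_leqif[].
  by rewrite card_mid_block_set.
have [le2E eqC] := total_dominating_card_leqif tdE.
have /forallP tight : [forall j : 'I_k, \sum_(0 <= r < 4) nat_mem E (4 * j + r) == 2].
  rewrite -eqC eqn_leq le2E -card_mid_block_set.
  exact: implyP (minE _) mid_block_total_dominating.
apply/setP => x; rewrite -nat_memE inE.
rewrite (tight_memE (@nat_mem_lt _ E) (elimT (total_dominatingP E) tdE)) ?ltn_ord //.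
by move=> j ltjk; apply/eqP/(tight (Ordinal ltjk)).
Qed.

End PathP4k.

Theorem corollary5p2 (k : nat) (hk : 1 <= k) (i : 'I_(4 * k)) :
  let v := i.+1 in
  TDV i = (if (v %% 4 == 0) || (v %% 4 == 1) then 0 else 1).
Proof.
rewrite /= (TDV_unique_gamma_t_set i (@gamma_t_setE k)) inE.
by case: ifP; lia.
Qed.
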